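(* If every geodesic on $\Sigma_\Gamma$ intersects the open ball $B(\pi(x),\rho)$, then $S^+(\ell,\rho,x)$ is $\varepsilon$-relatively dense for some real $\varepsilon>0$.
   Context: $\mathbb{D}=\{z\in\mathbb{C}:|z|<1\}$ with hyperbolic metric $d$ induced by $ds=2|dz|/(1-|z|^2)$; geodesics are parametrised with unit speed and the normal bundle of an oriented geodesic is oriented by the standard orientation of $\mathbb{D}$ and that of the geodesic. Standing setting: $\Gamma$ is a cocompact Fuchsian group with fundamental domain $\tau$ a hyperbolic polygon whose side-pairing generators are none of them their own inverse; $\Sigma_\Gamma=\Gamma\backslash\mathbb{D}$ with quotient map $\pi$ and induced metric; $\ell$ is a geodesic in $\mathbb{D}$ with unit-speed parametrisation $\kappa_\ell$ such that the image of $\{(\kappa_\ell(t),\kappa_\ell'(t))\}$ in $\operatorname{ST}(\Sigma_\Gamma)$ is a dense orbit of the geodesic flow; $x\in\tau^\circ$ and $\rho>0$. For a geodesic $k$ with unit-speed parametrisation $\kappa$: $\overline{\mathcal{N}(k,\rho)}^+$ is the union of $\{y:d(y,k)<\rho\}$ with the component of its boundary on the positive side of $k$; $p_k$ is orthogonal projection onto $k$; $S^+(k,\rho,x)=\kappa^{-1}(p_k(\Gamma(x)\cap\overline{\mathcal{N}(k,\rho)}^+))\subseteq\mathbb{R}$. A set $S\subseteq\mathbb{R}$ is $\varepsilon$-relatively dense if every $t\in\mathbb{R}$ has some $s\in S$ with $|t-s|\le\varepsilon$. *)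

From Stdlib Require Import Reals List Arith.
From Coquelicot Require Import Coquelicot.

Open Scope R_scope.

Definition in_disk (z : C) : Prop := Cmod z < 1.

(** Hyperbolic distance of the metric ds = 2|dz|/(1-|z|^2):
    d(z,w) = 2 artanh(|z-w| / |1 - conj(w) z|) = ln((1+t)/(1-t)). *)
Definition hdist (z w : C) : R :=
  let t := Cmod (z - w)%C / Cmod (1 - Cconj w * z)%C in
  ln ((1 + t) / (1 - t)).

Definition is_geodesic (k : R -> C) : Prop :=
  (forall t, in_disk (k t)) /\ (forall s t, hdist (k s) (k t) = Rabs (t - s)).

Definition unit_tangent (z v : C) : Prop :=
  in_disk z /\ 2 * Cmod v / (1 - Cmod z ^ 2) = 1.

Definition SU11 (g : C * C) : Prop := Cmod (fst g) ^ 2 - Cmod (snd g) ^ 2 = 1.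

Definition gmul (g h : C * C) : C * C :=
  ((fst g * fst h + snd g * Cconj (snd h))%C,
   (fst g * snd h + snd g * Cconj (fst h))%C).

Definition ginv (g : C * C) : C * C := (Cconj (fst g), (- snd g)%C).

Definition gone : C * C := (RtoC 1, RtoC 0).

Definition act (g : C * C) (z : C) : C :=
  ((fst g * z + snd g) / (Cconj (snd g) * z + Cconj (fst g)))%C.

(** complex derivative of [act g] at z (using |a|^2-|b|^2 = 1) *)
Definition dact (g : C * C) (z : C) : C :=
  (/ ((Cconj (snd g) * z + Cconj (fst g)) * (Cconj (snd g) * z + Cconj (fst g))))%C.

(** g is the identity of PSU(1,1) = SU(1,1)/{+-1} *)
Definition is_id_psu (g : C * C) : Prop := g = gone \/ g = (RtoC (-1), RtoC 0).

(** A Fuchsian group, given as a subgroup of SU(1,1) whose image in PSU(1,1)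
    is discrete (the identity is isolated). *)
Definition fuchsian (G : C * C -> Prop) : Prop :=
  (forall g, G g -> SU11 g) /\ G gone /\
  (forall g h, G g -> G h -> G (gmul g h)) /\
  (forall g, G g -> G (ginv g)) /\
  (exists e, 0 < e /\ forall g, G g -> Cmod (snd g) < e ->
      (Cmod (fst g - 1)%C < e -> g = gone) /\
      (Cmod (fst g + 1)%C < e -> g = (RtoC (-1), RtoC 0))).

(** The quotient G\D is compact. *)
Definition cocompact (G : C * C -> Prop) : Prop :=
  exists r, r < 1 /\ forall z, in_disk z -> exists g, G g /\ Cmod (act g z) <= r.

Definition interior_C (A : C -> Prop) (w : C) : Prop :=
  exists r, 0 < r /\ forall u, Cmod (u - w)%C < r -> A u.

Definition hseg (y z : C) (w : C) : Prop :=
  in_disk w /\ hdist y w + hdist w z = hdist y z.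

Definition hconvex (A : C -> Prop) : Prop :=
  forall y z, A y -> A z -> forall w, hseg y z w -> A w.

Definition hhull (vs : list C) (w : C) : Prop :=
  forall A : C -> Prop, hconvex A -> (forall v, In v vs -> A v) -> A w.

Definition side (vs : list C) (i : nat) : C -> Prop :=
  hseg (nth i vs (RtoC 0)) (nth (Nat.modulo (S i) (length vs)) vs (RtoC 0)).

(** tau is the compact hyperbolic polygon with vertices vs (listed in cyclic
    order): vertices in D, tau their convex hull, every vertex an extreme
    point, and consecutive vertices span boundary sides. *)
Definition hyp_polygon (vs : list C) (tau : C -> Prop) : Prop :=
  (3 <= length vs)%nat /\
  (forall v, In v vs -> in_disk v) /\
  (forall w, tau w <-> hhull vs w) /\
  (forall i, (i < length vs)%nat ->
      ~ hhull (firstn i vs ++ skipn (S i) vs) (nth i vs (RtoC 0))) /\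
  (forall i, (i < length vs)%nat -> forall w, side vs i w -> ~ interior_C tau w).

Definition fundamental_domain (G : C * C -> Prop) (tau : C -> Prop) : Prop :=
  (forall z, in_disk z -> exists g w, G g /\ tau w /\ z = act g w) /\
  (forall g, G g -> ~ is_id_psu g ->
      forall w, interior_C tau w -> ~ interior_C tau (act g w)).

Definition side_pairing (G : C * C -> Prop) (vs : list C) (tau : C -> Prop)
    (i : nat) (g : C * C) : Prop :=
  G g /\ ~ is_id_psu g /\
  exists j, (j < length vs)%nat /\
    (forall w, side vs j w <-> exists u, side vs i u /\ w = act g u) /\
    (forall w, (tau w /\ exists u, tau u /\ w = act g u) <-> side vs j w).

(** the image of t |-> (k t, k' t) in ST(G\D) is dense, i.e. its G-orbit is
    dense in ST(D) (G acting on tangent vectors by the derivative) *)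
Definition dense_in_ST (G : C * C -> Prop) (k : R -> C) : Prop :=
  forall z v, unit_tangent z v -> forall e, 0 < e ->
    exists t w g, is_derive k t w /\ G g /\
      Cmod (act g (k t) - z)%C < e /\ Cmod (dact g (k t) * w - v)%C < e.

(** kappa(s) = p_k(y): the orthogonal projection (nearest point) of y on k *)
Definition is_foot (k : R -> C) (y : C) (s : R) : Prop :=
  forall u, hdist y (k s) <= hdist y (k u).

(** y lies on the positive side of the oriented geodesic k, whose foot is
    k(s): the normal direction at k(s) pointing to y is i * k'(s)
    times a positive number, i.e. y - k(s) points to the left of k'(s). *)
Definition pos_side (k : R -> C) (s : R) (y : C) : Prop :=
  exists v, is_derive k s v /\ 0 < Im (Cconj v * (y - k s))%C.

Definition nbhd_plus (k : R -> C) (rho : R) (y : C) : Prop :=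
  exists s, is_foot k y s /\
    (hdist y (k s) < rho \/ (hdist y (k s) = rho /\ pos_side k s y)).

(** S^+(k, rho, x) = k^{-1}(p_k(G(x) /\ N^+(k,rho))) *)
Definition S_plus (G : C * C -> Prop) (k : R -> C) (rho : R) (x : C) (t : R)
  : Prop :=
  exists g, G g /\ nbhd_plus k rho (act g x) /\ is_foot k (act g x) t.

Definition rel_dense (eps : R) (S : R -> Prop) : Prop :=
  forall t, exists s, S s /\ Rabs (t - s) <= eps.

(* The hyperbolic distance is [2 artanh] of the Moebius-invariant pseudo-distance
   [|a - b| / |1 - conj(b) a|].  Every unit-speed geodesic is a Moebius translate of a diameter,
   so it depends continuously on its point and direction at time 0.  As every geodesic comes
   within [rho] of the orbit [Gamma x], compactness of the set of such data with point in a
   closed disk [|z| <= r] gives a uniform bound [T] on the time needed to do so.  By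
   cocompactness every [l t0] is moved into that disk by an element of [Gamma], so [l] comes
   within [rho] of [Gamma x] at a time within [T] of [t0]; the nearest point of [l] to that orbit
   point lies within a bounded time of it and, being at distance less than [rho], is in [S^+]. *)

From Stdlib Require Import Reals List Lra Psatz Classical IndefiniteDescription.
From Coquelicot Require Import Coquelicot.
Open Scope R_scope.

Lemma Cmod_eq_of_sqr (z w : C) :
  fst z ^ 2 + snd z ^ 2 = fst w ^ 2 + snd w ^ 2 -> Cmod z = Cmod w.
Proof. unfold Cmod; intros ->; reflexivity. Qed.

Lemma in_disk_Cmod_sqr z : in_disk z -> Cmod z ^ 2 < 1.
Proof. unfold in_disk; pose proof (Cmod_ge_0 z); nra. Qed.

Lemma in_disk_opp z : in_disk z -> in_disk (- z)%C.
Proof. unfold in_disk; rewrite Cmod_opp; auto. Qed.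

Lemma Cconj_neq_0 (z : C) : z <> RtoC 0 -> Cconj z <> RtoC 0.
Proof.
  intros Hz E; apply Hz, Cmod_eq_0.
  rewrite <- Cmod_conj, E; apply Cmod_0.
Qed.

Definition two_artanh (d : R) : R := ln ((1 + d) / (1 - d)).
Definition tanh_half (d : R) : R := (exp d - 1) / (exp d + 1).

Lemma tanh_half_bounds d : -1 < tanh_half d < 1.
Proof.
  unfold tanh_half; pose proof (exp_pos d).
  split; [apply Rlt_div_r | apply Rlt_div_l]; lra.
Qed.

Lemma two_artanh_tanh_half d : two_artanh (tanh_half d) = d.
Proof.
  unfold two_artanh, tanh_half; pose proof (exp_pos d).
  replace ((1 + (exp d - 1) / (exp d + 1)) / (1 - (exp d - 1) / (exp d + 1)))
    with (exp d) by (field; lra).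
  apply ln_exp.
Qed.

Lemma two_artanh_lt a b : -1 < a -> a < b -> b < 1 -> two_artanh a < two_artanh b.
Proof.
  intros; unfold two_artanh; apply ln_increasing; [apply Rdiv_lt_0_compat; lra|].
  replace ((1 + a) / (1 - a)) with (-1 + 2 * / (1 - a)) by (field; lra).
  replace ((1 + b) / (1 - b)) with (-1 + 2 * / (1 - b)) by (field; lra).
  apply Rplus_lt_compat_l, Rmult_lt_compat_l; [lra|].
  apply Rinv_lt_contravar; nra.
Qed.

Lemma two_artanh_0 : two_artanh 0 = 0.
Proof. unfold two_artanh; replace ((1 + 0) / (1 - 0)) with 1 by field; apply ln_1. Qed.

Lemma two_artanh_le a b : -1 < a -> a <= b -> b < 1 -> two_artanh a <= two_artanh b.
Proof. intros ? [Hab | <-] ?; [left; apply two_artanh_lt | right]; auto. Qed.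

Lemma two_artanh_lt_iff a b : -1 < a < 1 -> -1 < b < 1 ->
  two_artanh a < two_artanh b <-> a < b.
Proof.
  intros Ha Hb; split; [|intros; apply two_artanh_lt; lra].
  intros H; destruct (Rlt_or_le a b) as [|Hba]; auto.
  pose proof (two_artanh_le b a ltac:(lra) Hba ltac:(lra)); lra.
Qed.

Lemma two_artanh_le_iff a b : -1 < a < 1 -> -1 < b < 1 ->
  two_artanh a <= two_artanh b <-> a <= b.
Proof.
  intros Ha Hb; split; [|intros; apply two_artanh_le; lra].
  intros H; destruct (Rle_or_lt a b) as [|Hba]; auto.
  pose proof (two_artanh_lt b a ltac:(lra) Hba ltac:(lra)); lra.
Qed.

Lemma two_artanh_ge0 a : 0 <= a < 1 -> 0 <= two_artanh a.
Proof. intros; rewrite <- two_artanh_0; apply two_artanh_le; lra. Qed.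

Lemma tanh_half_two_artanh a : -1 < a < 1 -> tanh_half (two_artanh a) = a.
Proof.
  intros Ha; unfold tanh_half, two_artanh.
  rewrite exp_ln by (apply Rdiv_lt_0_compat; lra).
  field_simplify; [field|..]; lra.
Qed.

Lemma tanh_half_lt a b : a < b -> tanh_half a < tanh_half b.
Proof.
  intros; rewrite <- two_artanh_lt_iff, !two_artanh_tanh_half by apply tanh_half_bounds.
  assumption.
Qed.

Lemma tanh_half_le a b : a <= b -> tanh_half a <= tanh_half b.
Proof. intros [Hab | <-]; [left; apply tanh_half_lt | right]; auto. Qed.

Lemma tanh_half_0 : tanh_half 0 = 0.
Proof. unfold tanh_half; rewrite exp_0; field. Qed.

Lemma tanh_half_ge0 u : 0 <= u -> 0 <= tanh_half u.
Proof. intros; rewrite <- tanh_half_0; apply tanh_half_le; assumption. Qed.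

Lemma tanh_half_minus u v :
  tanh_half (u - v) = (tanh_half u - tanh_half v) / (1 - tanh_half u * tanh_half v).
Proof.
  unfold tanh_half; replace (exp (u - v)) with (exp u / exp v)
    by (unfold Rminus, Rdiv; rewrite exp_plus, exp_Ropp; reflexivity).
  pose proof (exp_pos u); pose proof (exp_pos v).
  field; repeat split; nra.
Qed.

Lemma tanh_half_opp u : tanh_half (- u) = - tanh_half u.
Proof.
  replace (- u) with (0 - u) by ring.
  rewrite tanh_half_minus, tanh_half_0; field.
Qed.

Lemma tanh_half_plus u v :
  tanh_half (u + v) = (tanh_half u + tanh_half v) / (1 + tanh_half u * tanh_half v).
Proof.
  replace (u + v) with (u - - v) by ring.
  rewrite tanh_half_minus, tanh_half_opp; f_equal; ring.
Qed.

Lemma tanh_half_abs u : tanh_half (Rabs u) = Rabs (tanh_half u).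
Proof.
  destruct (Rle_or_lt 0 u).
  - rewrite !Rabs_pos_eq; auto using tanh_half_ge0.
  - rewrite Rabs_left, Rabs_left, tanh_half_opp; auto.
    rewrite <- tanh_half_0; apply tanh_half_lt; assumption.
Qed.

Definition pdist (a b : C) : R := Cmod (a - b)%C / Cmod (1 - Cconj b * a)%C.

Lemma hdist_pdist a b : hdist a b = two_artanh (pdist a b).
Proof. reflexivity. Qed.

Lemma pdist_den_identity a b :
  Cmod (1 - Cconj b * a)%C ^ 2 - Cmod (a - b)%C ^ 2 = (1 - Cmod a ^ 2) * (1 - Cmod b ^ 2).
Proof. rewrite !Cmod2_alt; destruct a, b; simpl; ring. Qed.

Lemma pdist_den_pos a b : in_disk a -> in_disk b -> 0 < Cmod (1 - Cconj b * a)%C.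
Proof.
  intros Ha%in_disk_Cmod_sqr Hb%in_disk_Cmod_sqr.
  pose proof (pdist_den_identity a b) as E.
  pose proof (Cmod_ge_0 (1 - Cconj b * a)%C) as [|Z]; [assumption|].
  pose proof (Cmod_ge_0 (a - b)%C); rewrite <- Z in E; nra.
Qed.

Lemma pdist_ge0 a b : 0 <= pdist a b.
Proof.
  unfold pdist; pose proof (Cmod_ge_0 (1 - Cconj b * a)%C) as [|Z].
  - apply Rdiv_le_0_compat; [apply Cmod_ge_0 | assumption].
  - rewrite <- Z, Rdiv_0_r; lra.
Qed.

Lemma pdist_lt1 a b : in_disk a -> in_disk b -> pdist a b < 1.
Proof.
  intros Ha Hb; pose proof (pdist_den_pos a b Ha Hb).
  unfold pdist; apply Rlt_div_l; [assumption|]; rewrite Rmult_1_l.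
  apply in_disk_Cmod_sqr in Ha, Hb.
  pose proof (pdist_den_identity a b); pose proof (Cmod_ge_0 (a - b)%C); nra.
Qed.

Lemma pdist_bounds a b : in_disk a -> in_disk b -> -1 < pdist a b < 1.
Proof. intros Ha Hb; pose proof (pdist_ge0 a b); pose proof (pdist_lt1 a b Ha Hb); lra. Qed.

Lemma pdist_sym a b : pdist a b = pdist b a.
Proof. unfold pdist; f_equal; apply Cmod_eq_of_sqr; destruct a, b; simpl; ring. Qed.

Lemma pdist_0r a : pdist a 0 = Cmod a.
Proof.
  unfold pdist.
  rewrite (Cmod_eq_of_sqr (1 - Cconj 0 * a) 1), (Cmod_eq_of_sqr (a - 0) a), Cmod_1
    by (destruct a; simpl; ring).
  field.
Qed.

Lemma pdist_0l a : pdist 0 a = Cmod a.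
Proof. rewrite pdist_sym; apply pdist_0r. Qed.

Lemma hdist_lt_iff a b d : in_disk a -> in_disk b ->
  hdist a b < d <-> pdist a b < tanh_half d.
Proof.
  intros Ha Hb; rewrite hdist_pdist, <- (two_artanh_tanh_half d) at 1.
  apply two_artanh_lt_iff; [apply pdist_bounds | apply tanh_half_bounds]; assumption.
Qed.

Lemma hdist_le_iff a b c e : in_disk a -> in_disk b -> in_disk c -> in_disk e ->
  hdist a b <= hdist c e <-> pdist a b <= pdist c e.
Proof. intros; rewrite !hdist_pdist; apply two_artanh_le_iff; apply pdist_bounds; assumption. Qed.

Lemma geodesic_pdist k s t : is_geodesic k -> pdist (k s) (k t) = tanh_half (Rabs (t - s)).
Proof.
  intros [Hk Hdist]; rewrite <- Hdist, hdist_pdist, tanh_half_two_artanh; [reflexivity|].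
  apply pdist_bounds; apply Hk.
Qed.

Definition mdet (g : C * C) : R := Cmod (fst g) ^ 2 - Cmod (snd g) ^ 2.

Definition act_den (g : C * C) (z : C) : C := (Cconj (snd g) * z + Cconj (fst g))%C.

Lemma mdet_Cconj g : (fst g * Cconj (fst g) - snd g * Cconj (snd g))%C = RtoC (mdet g).
Proof.
  unfold mdet; rewrite !Cmod2_alt; destruct g as [[a1 a2] [b1 b2]].
  apply injective_projections; simpl; ring.
Qed.

Lemma mdet_ginv g : mdet (ginv g) = mdet g.
Proof. unfold mdet, ginv; simpl; rewrite Cmod_conj, Cmod_opp; reflexivity. Qed.

Lemma act_den_identity g z :
  Cmod (act_den g z) ^ 2 - Cmod (fst g * z + snd g)%C ^ 2 = mdet g * (1 - Cmod z ^ 2).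
Proof.
  unfold act_den, mdet; rewrite !Cmod2_alt.
  destruct g as [[a1 a2] [b1 b2]], z; simpl; ring.
Qed.

Lemma act_den_neq_0 g z : 0 < mdet g -> in_disk z -> act_den g z <> RtoC 0.
Proof.
  intros Hg Hz%in_disk_Cmod_sqr E.
  pose proof (act_den_identity g z) as Id; rewrite E, Cmod_0 in Id.
  pose proof (Cmod_ge_0 (fst g * z + snd g)%C); nra.
Qed.

Lemma act_in_disk g z : 0 < mdet g -> in_disk z -> in_disk (act g z).
Proof.
  intros Hg Hz; pose proof (act_den_neq_0 g z Hg Hz) as D.
  unfold in_disk, act; rewrite Cmod_div by exact D; fold (act_den g z).
  apply Cmod_gt_0 in D; apply Rlt_div_l; [assumption|]; rewrite Rmult_1_l.
  apply in_disk_Cmod_sqr in Hz; pose proof (act_den_identity g z).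
  pose proof (Cmod_ge_0 (fst g * z + snd g)%C); nra.
Qed.

Lemma act_sub g a b : act_den g a <> RtoC 0 -> act_den g b <> RtoC 0 ->
  (act g a - act g b)%C = (RtoC (mdet g) * (a - b) / (act_den g a * act_den g b))%C.
Proof.
  intros; rewrite <- mdet_Cconj; unfold act; fold (act_den g a) (act_den g b).
  unfold act_den in *; field; split; assumption.
Qed.

Lemma act_pdist_den g a b : act_den g a <> RtoC 0 -> act_den g b <> RtoC 0 ->
  (1 - Cconj (act g b) * act g a)%C
  = (RtoC (mdet g) * (1 - Cconj b * a) / (Cconj (act_den g b) * act_den g a))%C.
Proof.
  intros Ha Hb; pose proof (Cconj_neq_0 _ Hb) as Hb'.
  rewrite <- mdet_Cconj; unfold act; fold (act_den g a) (act_den g b).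
  rewrite Cdiv_conj by exact Hb; revert Hb'; unfold act_den in *; intros Hb'.
  rewrite !Cplus_conj, !Cmult_conj, !Cconj_conj in *.
  field; split; assumption.
Qed.

Lemma pdist_act g a b : 0 < mdet g -> in_disk a -> in_disk b ->
  pdist (act g a) (act g b) = pdist a b.
Proof.
  intros Hg Ha Hb.
  pose proof (act_den_neq_0 g a Hg Ha) as Da; pose proof (act_den_neq_0 g b Hg Hb) as Db.
  pose proof (pdist_den_pos a b Ha Hb).
  unfold pdist; rewrite act_sub, act_pdist_den by assumption.
  rewrite !Cmod_div by (apply Cmult_neq_0; auto using Cconj_neq_0).
  rewrite !Cmod_mult, Cmod_conj, Cmod_R, Rabs_pos_eq by lra.
  apply Cmod_gt_0 in Da, Db; field; repeat split; lra.
Qed.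

Lemma act_gmul g h z : 0 < mdet g -> 0 < mdet h -> in_disk z ->
  act (gmul g h) z = act g (act h z).
Proof.
  intros Hg Hh Hz.
  pose proof (act_den_neq_0 g _ Hg (act_in_disk h z Hh Hz)) as Dg.
  pose proof (act_den_neq_0 h z Hh Hz) as Dh; revert Dg Dh.
  destruct g as [a b], h as [c d]; unfold act, act_den, gmul; simpl; intros Dg Dh.
  rewrite !Cplus_conj, !Cmult_conj, !Cconj_conj.
  field; split; [assumption|].
  replace (Cconj b * (c * z + d) + Cconj a * (Cconj d * z + Cconj c))%C with
    ((Cconj b * ((c * z + d) / (Cconj d * z + Cconj c)) + Cconj a)
     * (Cconj d * z + Cconj c))%C by (field; assumption).
  apply Cmult_neq_0; assumption.
Qed.

Lemma act_ginv_act h z : mdet h = 1 -> in_disk z -> act (ginv h) (act h z) = z.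
Proof.
  intros Hh Hz; pose proof (act_den_neq_0 h z ltac:(lra) Hz) as D.
  pose proof (mdet_Cconj h) as E; rewrite Hh in E.
  destruct h as [a b]; revert D E; unfold act, act_den, ginv; simpl; intros D E.
  rewrite Copp_conj, Cconj_conj.
  replace (Cconj a * ((a * z + b) / (Cconj b * z + Cconj a)) + - b)%C
    with (z * (a * Cconj a - b * Cconj b) / (Cconj b * z + Cconj a))%C by (field; auto).
  replace (- Cconj b * ((a * z + b) / (Cconj b * z + Cconj a)) + a)%C
    with ((a * Cconj a - b * Cconj b) / (Cconj b * z + Cconj a))%C by (field; auto).
  rewrite E; field; assumption.
Qed.

Lemma act_act_ginv h z : mdet h = 1 -> in_disk z -> act h (act (ginv h) z) = z.
Proof.
  intros; replace h with (ginv (ginv h)) at 1.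
  - apply act_ginv_act; [rewrite mdet_ginv|]; assumption.
  - destruct h as [a b]; unfold ginv; simpl; rewrite Cconj_conj; f_equal; ring.
Qed.

Definition translation (b : C) : C * C := (RtoC 1, b).

Lemma mdet_translation_pos b : in_disk b -> 0 < mdet (translation b).
Proof.
  intros Hb%in_disk_Cmod_sqr; unfold mdet, translation; simpl; rewrite Cmod_1; lra.
Qed.

Lemma act_translation_opp b : act (translation (- b)%C) b = RtoC 0.
Proof. unfold act, translation; simpl; unfold Cdiv; ring. Qed.

Lemma act_translation_cancel z w : in_disk z -> in_disk w ->
  act (translation z) (act (translation (- z)%C) w) = w.
Proof.
  intros Hz Hw.
  pose proof (mdet_translation_pos _ (in_disk_opp z Hz)) as Hz'.
  pose proof (act_den_neq_0 _ w Hz' Hw) as D1.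
  pose proof (act_den_neq_0 _ _ (mdet_translation_pos z Hz) (act_in_disk _ _ Hz' Hw)) as D2.
  assert (D3 : (1 - Cconj z * z)%C <> RtoC 0).
  { intros E; apply (f_equal fst) in E; apply in_disk_Cmod_sqr in Hz.
    rewrite Cmod2_alt in Hz; destruct z; simpl in *; lra. }
  revert D1 D2; unfold act, act_den, translation; simpl.
  replace (Cconj (RtoC 1)) with (RtoC 1) by (apply injective_projections; simpl; ring).
  rewrite Copp_conj; intros; field; repeat split; auto.
  replace (Cconj z * (w + - z) + (- Cconj z * w + 1))%C with (1 - Cconj z * z)%C by ring.
  assumption.
Qed.

Lemma pdist_triangle_0 a c : in_disk a -> in_disk c ->
  pdist a c <= (Cmod a + Cmod c) / (1 + Cmod a * Cmod c).
Proof.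
  intros Ha Hc; pose proof (pdist_den_pos a c Ha Hc) as P; unfold pdist.
  pose proof (pdist_den_identity a c) as E.
  assert (T : Cmod (1 - Cconj c * a)%C <= 1 + Cmod a * Cmod c).
  { unfold Cminus; eapply Rle_trans; [apply Cmod_triangle|].
    rewrite Cmod_1, Cmod_opp, Cmod_mult, Cmod_conj; lra. }
  unfold in_disk in *.
  pose proof (Cmod_ge_0 a); pose proof (Cmod_ge_0 c); pose proof (Cmod_ge_0 (a - c)%C).
  set (D := Cmod (1 - Cconj c * a)%C) in *; set (N := Cmod (a - c)%C) in *.
  set (x := Cmod a) in *; set (y := Cmod c) in *.
  apply Rle_div_l; [assumption|].
  replace ((x + y) / (1 + x * y) * D) with ((x + y) * D / (1 + x * y)) by (field; nra).
  apply Rle_div_r; [nra|].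
  (* square both sides, using N^2 = D^2 - (1 - x^2)(1 - y^2) and D <= 1 + x y *)
  apply Rsqr_incr_0_var; [unfold Rsqr|nra].
  assert (D ^ 2 <= (1 + x * y) ^ 2) by nra.
  assert (0 <= (1 - x ^ 2) * (1 - y ^ 2)) by (apply Rmult_le_pos; nra).
  replace ((1 + x * y) ^ 2) with ((x + y) ^ 2 + (1 - x ^ 2) * (1 - y ^ 2)) in * by ring.
  nra.
Qed.

Lemma pdist_triangle a b c : in_disk a -> in_disk b -> in_disk c ->
  pdist a c <= (pdist a b + pdist b c) / (1 + pdist a b * pdist b c).
Proof.
  intros Ha Hb Hc; pose proof (mdet_translation_pos _ (in_disk_opp b Hb)) as Hm.
  rewrite <- (pdist_act _ a c Hm Ha Hc), <- (pdist_act _ a b Hm Ha Hb),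
    <- (pdist_act _ b c Hm Hb Hc), act_translation_opp, pdist_0r, pdist_0l.
  apply pdist_triangle_0; apply act_in_disk; assumption.
Qed.

Lemma pdist_le_of_common_near a b c q : in_disk a -> in_disk b -> in_disk c ->
  pdist b a <= q -> pdist b c <= q -> q < 1 -> pdist a c <= 2 * q / (1 + q ^ 2).
Proof.
  intros Ha Hb Hc Hba Hbc Hq; rewrite pdist_sym in Hba.
  pose proof (pdist_triangle a b c Ha Hb Hc) as T.
  pose proof (pdist_ge0 a b); pose proof (pdist_ge0 b c).
  set (u := pdist a b) in *; set (v := pdist b c) in *.
  eapply Rle_trans; [apply T|].
  apply Rle_div_l; [nra|].
  replace (2 * q / (1 + q ^ 2) * (1 + u * v)) with (2 * q * (1 + u * v) / (1 + q ^ 2))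
    by (field; nra).
  apply Rle_div_r; [nra|].
  assert (0 <= (q - u) * (1 - q * v)) by (apply Rmult_le_pos; nra).
  assert (0 <= (q - v) * (1 - q * u)) by (apply Rmult_le_pos; nra).
  nra.
Qed.

Lemma hdist_act g a b : 0 < mdet g -> in_disk a -> in_disk b ->
  hdist (act g a) (act g b) = hdist a b.
Proof. intros; rewrite !hdist_pdist, pdist_act; auto. Qed.

Lemma geodesic_act g k : 0 < mdet g -> is_geodesic k -> is_geodesic (fun u => act g (k u)).
Proof.
  intros Hg [Hk Hdist]; split; [intros; apply act_in_disk; auto|].
  intros; rewrite hdist_act; auto.
Qed.

Lemma geodesic_shift k t0 : is_geodesic k -> is_geodesic (fun u => k (t0 + u)).
Proof.
  intros [Hk Hdist]; split; [intros; apply Hk|].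
  intros s t; rewrite Hdist; f_equal; ring.
Qed.

Definition std_geodesic (z e : C) (u : R) : C := act (translation z) (RtoC (tanh_half u) * e)%C.

Lemma diameter_in_disk u e : Cmod e = 1 -> in_disk (RtoC (tanh_half u) * e)%C.
Proof.
  intros He; unfold in_disk; rewrite Cmod_mult, Cmod_R, He, Rmult_1_r.
  pose proof (tanh_half_bounds u); apply Rabs_def1; lra.
Qed.

Lemma pdist_diameter s t e : Cmod e = 1 ->
  pdist (RtoC (tanh_half s) * e)%C (RtoC (tanh_half t) * e)%C = tanh_half (Rabs (t - s)).
Proof.
  intros He; assert (U : fst e ^ 2 + snd e ^ 2 = 1) by (rewrite <- Cmod2_alt, He; ring).
  pose proof (tanh_half_bounds s); pose proof (tanh_half_bounds t).
  unfold pdist.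
  replace (RtoC (tanh_half s) * e - RtoC (tanh_half t) * e)%C
    with (RtoC (tanh_half s - tanh_half t) * e)%C
    by (apply injective_projections; simpl; ring).
  replace (1 - Cconj (RtoC (tanh_half t) * e) * (RtoC (tanh_half s) * e))%C
    with (RtoC (1 - tanh_half s * tanh_half t * (fst e ^ 2 + snd e ^ 2)))
    by (apply injective_projections; simpl; ring).
  rewrite Cmod_mult, He, U, Rmult_1_r, Rmult_1_r, !Cmod_R.
  rewrite (Rabs_pos_eq (1 - _)) by nra.
  replace (t - s) with (- (s - t)) by ring.
  rewrite Rabs_Ropp, tanh_half_abs, tanh_half_minus, Rabs_div, (Rabs_pos_eq (1 - _)) by nra.
  reflexivity.
Qed.

Lemma std_geodesic_in_disk z e u : in_disk z -> Cmod e = 1 -> in_disk (std_geodesic z e u).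
Proof.
  intros; apply act_in_disk; [apply mdet_translation_pos | apply diameter_in_disk]; assumption.
Qed.

Lemma std_geodesic_is_geodesic z e : in_disk z -> Cmod e = 1 -> is_geodesic (std_geodesic z e).
Proof.
  intros Hz He; split; [intros; apply std_geodesic_in_disk; assumption|].
  intros s t; unfold std_geodesic.
  rewrite hdist_act, hdist_pdist, pdist_diameter, two_artanh_tanh_half;
    auto using mdet_translation_pos, diameter_in_disk.
Qed.

Lemma collinear_of_radial_coords a1 a2 c1 c2 x y s :
  x ^ 2 = a1 ^ 2 + a2 ^ 2 -> y ^ 2 = c1 ^ 2 + c2 ^ 2 -> 0 <= x < 1 -> 0 < y < 1 ->
  (s = 1 \/ s = -1) ->
  ((a1 - c1) ^ 2 + (a2 - c2) ^ 2) * (1 - s * x * y) ^ 2 =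
  (x - s * y) ^ 2 * ((1 - (c1 * a1 + c2 * a2)) ^ 2 + (c1 * a2 - c2 * a1) ^ 2) ->
  y * a1 = s * x * c1 /\ y * a2 = s * x * c2.
Proof.
  intros Hx Hy Bx By Hs E.
  set (P := a1 * c1 + a2 * c2).
  assert (S2 : s ^ 2 = 1) by (destruct Hs; subst; ring).
  rewrite (Rplus_comm ((a1 - c1) ^ 2)) in E.
  replace ((a2 - c2) ^ 2 + (a1 - c1) ^ 2) with (x ^ 2 + y ^ 2 - 2 * P) in E
    by (unfold P; rewrite Hx, Hy; ring).
  replace ((1 - (c1 * a1 + c2 * a2)) ^ 2 + (c1 * a2 - c2 * a1) ^ 2)
    with (1 + x ^ 2 * y ^ 2 - 2 * P) in E by (unfold P; rewrite Hx, Hy; ring).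
  assert (HP : P = s * x * y).
  { assert (Id : (x ^ 2 + y ^ 2 - 2 * P) * (1 - s * x * y) ^ 2
                 - (x - s * y) ^ 2 * (1 + x ^ 2 * y ^ 2 - 2 * P)
                 = 2 * ((1 - x ^ 2) * (1 - y ^ 2) * (s * x * y - P)))
      by (destruct Hs; subst s; ring).
    assert (0 < (1 - x ^ 2) * (1 - y ^ 2)) by (apply Rmult_lt_0_compat; nra).
    nra. }
  assert (Z : (y * a1 - s * x * c1) ^ 2 + (y * a2 - s * x * c2) ^ 2 = 0).
  { replace ((y * a1 - s * x * c1) ^ 2 + (y * a2 - s * x * c2) ^ 2) with
      (y ^ 2 * (a1 ^ 2 + a2 ^ 2) + s ^ 2 * x ^ 2 * (c1 ^ 2 + c2 ^ 2) - 2 * s * x * y * P)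
      by (unfold P; ring).
    rewrite <- Hx, <- Hy, HP, S2; ring_simplify; rewrite S2; ring. }
  pose proof (pow2_ge_0 (y * a1 - s * x * c1)); pose proof (pow2_ge_0 (y * a2 - s * x * c2)).
  split; apply Rminus_diag_uniq, Rsqr_eq_0; unfold Rsqr; lra.
Qed.

(* The hypothesis says that [pdist a c] has the value it takes when [a] and [c] lie on a common
   diameter, on the same side of 0 if [s = 1] and on opposite sides if [s = -1]. *)
Lemma collinear_of_pdist_radial a c s : in_disk a -> in_disk c -> 0 < Cmod c ->
  (s = 1 \/ s = -1) ->
  pdist a c ^ 2 * (1 - s * Cmod a * Cmod c) ^ 2 = (Cmod a - s * Cmod c) ^ 2 ->
  a = (RtoC (s * Cmod a / Cmod c) * c)%C.
Proof.
  intros Ha Hc Pc Hs E.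
  pose proof (pdist_den_pos a c Ha Hc).
  assert (E2 : Cmod (a - c)%C ^ 2 * (1 - s * Cmod a * Cmod c) ^ 2 =
               (Cmod a - s * Cmod c) ^ 2 * Cmod (1 - Cconj c * a)%C ^ 2)
    by (rewrite <- E; unfold pdist; field; lra).
  pose proof (Cmod2_alt a) as Sa; pose proof (Cmod2_alt c) as Sc.
  pose proof (Cmod_ge_0 a); unfold in_disk in *; rewrite !Cmod2_alt in E2.
  destruct a as [a1 a2], c as [c1 c2]; simpl in Sa, Sc, E2.
  destruct (collinear_of_radial_coords a1 a2 c1 c2 (Cmod (a1, a2)) (Cmod (c1, c2)) s)
    as [e1 e2]; auto; try lra.
  apply injective_projections; simpl; field_simplify; try lra;
    [rewrite <- e1 | rewrite <- e2]; field; lra.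
Qed.

Lemma geodesic_through_0 p : is_geodesic p -> p 0 = RtoC 0 ->
  forall u, p u = (RtoC (tanh_half u) * (RtoC (/ tanh_half 1) * p 1))%C.
Proof.
  intros Hp P0 u; pose proof Hp as [Hd _].
  assert (Mp : forall v, Cmod (p v) = tanh_half (Rabs v)).
  { intros v; rewrite <- pdist_0l, <- P0, geodesic_pdist, Rminus_0_r by assumption.
    reflexivity. }
  set (g := tanh_half 1).
  assert (Hg : 0 < g < 1).
  { pose proof (tanh_half_bounds 1); rewrite <- tanh_half_0; unfold g.
    split; [apply tanh_half_lt|]; lra. }
  assert (Mp1 : Cmod (p 1) = g) by (rewrite Mp, Rabs_pos_eq by lra; reflexivity).
  pose proof (tanh_half_bounds u).
  assert (exists s, (s = 1 \/ s = -1) /\ s * Cmod (p u) = tanh_half u /\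
    pdist (p u) (p 1) ^ 2 * (1 - s * Cmod (p u) * Cmod (p 1)) ^ 2
    = (Cmod (p u) - s * Cmod (p 1)) ^ 2) as [s [Hs [Hsu E]]].
  { rewrite geodesic_pdist, Mp, Mp1 by assumption.
    destruct (Rle_or_lt 0 u) as [Hu|Hu].
    - exists 1; rewrite (Rabs_pos_eq u), tanh_half_abs, pow2_abs, tanh_half_minus by lra.
      split; [auto|split; [ring|]]; fold g.
      assert (g * tanh_half u < 1) by nra.
      field; lra.
    - exists (-1); rewrite (Rabs_left u), (Rabs_pos_eq (1 - u)), tanh_half_opp by lra.
      replace (1 - u) with (1 + - u) by ring; rewrite tanh_half_plus, tanh_half_opp; fold g.
      assert (tanh_half u < 0) by (rewrite <- tanh_half_0; apply tanh_half_lt; lra).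
      split; [auto|split; [ring|]].
      field; nra. }
  rewrite (collinear_of_pdist_radial (p u) (p 1) s), Mp1, Hsu by (auto; lra).
  apply injective_projections; simpl; field; lra.
Qed.

Lemma geodesic_eq_std_geodesic k : is_geodesic k ->
  exists e, Cmod e = 1 /\ forall u, k u = std_geodesic (k 0) e u.
Proof.
  intros Hk; pose proof Hk as [Hd _].
  pose proof (mdet_translation_pos _ (in_disk_opp _ (Hd 0))) as Hm.
  set (p := fun u => act (translation (- k 0)%C) (k u)).
  assert (Hp : is_geodesic p) by (apply geodesic_act; assumption).
  assert (P0 : p 0 = RtoC 0) by apply act_translation_opp.
  exists (RtoC (/ tanh_half 1) * p 1)%C; split.
  - rewrite Cmod_mult, Cmod_R, <- pdist_0l, <- P0, geodesic_pdist by assumption.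
    assert (0 < tanh_half 1) by (rewrite <- tanh_half_0; apply tanh_half_lt; lra).
    rewrite Rminus_0_r, Rabs_R1, Rabs_pos_eq by (left; apply Rinv_0_lt_compat; assumption).
    field; lra.
  - intros u; unfold std_geodesic; rewrite <- geodesic_through_0 by assumption.
    symmetry; apply act_translation_cancel; apply Hd.
Qed.

Section Continuity.

Context {U : UniformSpace}.

Lemma continuous_Rplus (f g : U -> R) x :
  continuous f x -> continuous g x -> continuous (fun u => f u + g u) x.
Proof. apply (continuous_plus f g). Qed.

Lemma continuous_Rmult (f g : U -> R) x :
  continuous f x -> continuous g x -> continuous (fun u => f u * g u) x.
Proof. apply (continuous_mult f g). Qed.

Lemma continuous_Ropp (f : U -> R) x : continuous f x -> continuous (fun u => - f u) x.
Proof. apply (continuous_opp f). Qed.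

Lemma continuous_Rminus (f g : U -> R) x :
  continuous f x -> continuous g x -> continuous (fun u => f u - g u) x.
Proof. intros; apply continuous_Rplus; [|apply continuous_Ropp]; assumption. Qed.

Lemma continuous_R_comp (f : U -> R) (h : R -> R) x :
  continuous f x -> continuous h (f x) -> continuous (fun u => h (f u)) x.
Proof. apply (continuous_comp f h). Qed.

Lemma continuous_Rinv_comp (f : U -> R) x :
  continuous f x -> f x <> 0 -> continuous (fun u => / f u) x.
Proof. intros; apply continuous_R_comp; [|apply continuous_Rinv]; assumption. Qed.

Definition ccontinuous (F : U -> C) x :=
  continuous (fun u => fst (F u)) x /\ continuous (fun u => snd (F u)) x.

Lemma ccontinuous_const (c : C) x : ccontinuous (fun _ => c) x.
Proof. split; apply continuous_const. Qed.

Lemma ccontinuous_plus F G x :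
  ccontinuous F x -> ccontinuous G x -> ccontinuous (fun u => F u + G u)%C x.
Proof. intros [] []; split; apply continuous_Rplus; assumption. Qed.

Lemma ccontinuous_minus F G x :
  ccontinuous F x -> ccontinuous G x -> ccontinuous (fun u => F u - G u)%C x.
Proof.
  intros [] []; split; simpl; apply continuous_Rplus; try apply continuous_Ropp; assumption.
Qed.

Lemma ccontinuous_mult F G x :
  ccontinuous F x -> ccontinuous G x -> ccontinuous (fun u => F u * G u)%C x.
Proof.
  intros [] []; split; simpl;
    [apply continuous_Rminus | apply continuous_Rplus]; apply continuous_Rmult; assumption.
Qed.

Lemma ccontinuous_conj F x : ccontinuous F x -> ccontinuous (fun u => Cconj (F u)) x.
Proof. intros []; split; simpl; [|apply continuous_Ropp]; assumption. Qed.

Lemma continuous_Cnorm2 F x :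
  ccontinuous F x -> continuous (fun u => fst (F u) ^ 2 + snd (F u) ^ 2) x.
Proof.
  intros []; apply continuous_Rplus; simpl; apply continuous_Rmult; try assumption;
    apply continuous_Rmult; try assumption; apply continuous_const.
Qed.

Lemma ccontinuous_div F G x : ccontinuous F x -> ccontinuous G x -> G x <> RtoC 0 ->
  ccontinuous (fun u => F u / G u)%C x.
Proof.
  intros HF HG Hx; apply ccontinuous_mult; [assumption|].
  assert (Q : fst (G x) ^ 2 + snd (G x) ^ 2 <> 0).
  { intros Z; apply Hx, Cmod_eq_0; unfold Cmod; rewrite Z; apply sqrt_0. }
  pose proof (continuous_Rinv_comp _ x (continuous_Cnorm2 G x HG) Q).
  destruct HG; split; simpl; unfold Rdiv; apply continuous_Rmult;
    try apply continuous_Ropp; assumption.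
Qed.

Lemma continuous_Cmod F x : ccontinuous F x -> continuous (fun u => Cmod (F u)) x.
Proof.
  intros; apply (continuous_R_comp (fun u => fst (F u) ^ 2 + snd (F u) ^ 2) sqrt).
  - apply continuous_Cnorm2; assumption.
  - apply continuous_sqrt.
Qed.

Lemma continuous_pdist F w x : ccontinuous F x -> in_disk (F x) -> in_disk w ->
  continuous (fun u => pdist (F u) w) x.
Proof.
  intros HF HFx Hw; unfold pdist, Rdiv; apply continuous_Rmult.
  - apply continuous_Cmod, ccontinuous_minus; [|apply ccontinuous_const]; assumption.
  - pose proof (pdist_den_pos _ _ HFx Hw).
    apply continuous_Rinv_comp; [|lra].
    apply continuous_Cmod, ccontinuous_minus; [apply ccontinuous_const|].
    apply ccontinuous_mult; [apply ccontinuous_const | assumption].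
Qed.

Lemma ccontinuous_act_translation (Z W : U -> C) x : ccontinuous Z x -> ccontinuous W x ->
  act_den (translation (Z x)) (W x) <> RtoC 0 ->
  ccontinuous (fun u => act (translation (Z u)) (W u)) x.
Proof.
  intros HZ HW Hd; unfold act, translation; simpl; apply ccontinuous_div.
  - apply ccontinuous_plus; [apply ccontinuous_mult; [apply ccontinuous_const|]|]; assumption.
  - apply ccontinuous_plus; [|apply ccontinuous_const].
    apply ccontinuous_mult; [apply ccontinuous_conj|]; assumption.
  - exact Hd.
Qed.

End Continuity.

Lemma ccontinuous_of_ex_derive (k : R -> C) t : ex_derive k t -> ccontinuous k t.
Proof.
  intros H%ex_derive_continuous; split.
  - apply (continuous_comp k fst); [assumption | apply continuous_fst].
  - apply (continuous_comp k snd); [assumption | apply continuous_snd].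
Qed.

Definition polar_center (y : R * (R * R)) : C :=
  (fst y * cos (fst (snd y)), fst y * sin (fst (snd y))).

Definition polar_direction (y : R * (R * R)) : C := (cos (snd (snd y)), sin (snd (snd y))).

Definition polar_geodesic (y : R * (R * R)) : R -> C :=
  std_geodesic (polar_center y) (polar_direction y).

Lemma Cmod_polar_center y : Cmod (polar_center y) = Rabs (fst y).
Proof.
  rewrite <- Cmod_R; apply Cmod_eq_of_sqr; unfold polar_center; simpl.
  pose proof (sin2_cos2 (fst (snd y))); unfold Rsqr in *; nra.
Qed.

Lemma Cmod_polar_direction y : Cmod (polar_direction y) = 1.
Proof.
  rewrite <- Cmod_1; apply Cmod_eq_of_sqr; unfold polar_direction; simpl.
  pose proof (sin2_cos2 (snd (snd y))); unfold Rsqr in *; lra.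
Qed.

Lemma ccontinuous_polar_center y : ccontinuous polar_center y.
Proof.
  assert (Hphi : continuous (fun y : R * (R * R) => fst (snd y)) y).
  { apply (continuous_comp snd fst); [apply continuous_snd | apply continuous_fst]. }
  split; apply continuous_Rmult; try apply continuous_fst;
    apply (continuous_R_comp (fun y : R * (R * R) => fst (snd y)));
    auto using continuous_cos, continuous_sin.
Qed.

Lemma ccontinuous_polar_direction y : ccontinuous polar_direction y.
Proof.
  assert (Htheta : continuous (fun y : R * (R * R) => snd (snd y)) y).
  { apply (continuous_comp snd snd); apply continuous_snd. }
  split; apply (continuous_R_comp (fun y : R * (R * R) => snd (snd y)));
    auto using continuous_cos, continuous_sin.
Qed.

Lemma continuous_pdist_polar_geodesic t w y : Rabs (fst y) < 1 -> in_disk w ->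
  continuous (fun y => pdist (polar_geodesic y t) w) y.
Proof.
  intros Hy Hw.
  assert (Hz : in_disk (polar_center y)) by (unfold in_disk; rewrite Cmod_polar_center; assumption).
  apply continuous_pdist;
    [| apply std_geodesic_in_disk; [|apply Cmod_polar_direction] | ]; try assumption.
  apply ccontinuous_act_translation.
  - apply ccontinuous_polar_center.
  - apply ccontinuous_mult; [apply ccontinuous_const | apply ccontinuous_polar_direction].
  - apply act_den_neq_0; [apply mdet_translation_pos; assumption|].
    apply diameter_in_disk, Cmod_polar_direction.
Qed.

Lemma unit_circle_angle u v : u ^ 2 + v ^ 2 = 1 ->
  exists th, 0 <= th <= 2 * PI /\ cos th = u /\ sin th = v.
Proof.
  intros H; assert (Bu : -1 <= u <= 1) by nra.
  pose proof (acos_bound u); pose proof PI_RGT_0.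
  assert (Sv : sqrt (1 - u²) = Rabs v).
  { rewrite <- sqrt_Rsqr_abs; f_equal; unfold Rsqr; nra. }
  destruct (Rle_or_lt 0 v).
  - exists (acos u); split; [lra|].
    rewrite cos_acos, sin_acos, Sv, Rabs_pos_eq by assumption; auto.
  - exists (2 * PI - acos u); split; [lra|].
    rewrite cos_minus, sin_minus, cos_2PI, sin_2PI, cos_acos, sin_acos, Sv, Rabs_left
      by assumption.
    split; ring.
Qed.

Lemma polar_center_surj z r : Cmod z <= r -> exists rh ph,
  0 <= rh <= r /\ 0 <= ph <= 2 * PI /\ forall th, polar_center (rh, (ph, th)) = z.
Proof.
  intros Hz; pose proof (Cmod_ge_0 z) as [Pz | Z].
  - destruct (unit_circle_angle (fst z / Cmod z) (snd z / Cmod z)) as [ph [Bph [Hc Hs]]].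
    { pose proof (Cmod2_alt z); field_simplify; [|lra..].
      unfold Re, Im in *; rewrite <- H; field; lra. }
    exists (Cmod z), ph; split; [lra | split; [assumption|]].
    intros th; unfold polar_center; simpl; rewrite Hc, Hs.
    destruct z; apply injective_projections; simpl; field; lra.
  - symmetry in Z; apply Cmod_eq_0 in Z; subst z; rewrite Cmod_0 in Hz.
    exists 0, 0; pose proof PI_RGT_0; split; [lra | split; [lra|]].
    intros th; unfold polar_center; apply injective_projections; simpl; ring.
Qed.

Lemma polar_direction_surj e : Cmod e = 1 ->
  exists th, 0 <= th <= 2 * PI /\ forall rh ph, polar_direction (rh, (ph, th)) = e.
Proof.
  intros He; destruct (unit_circle_angle (fst e) (snd e)) as [th [B [Hc Hs]]].
  - pose proof (Cmod2_alt e) as E; rewrite He in E; unfold Re, Im in E; lra.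
  - exists th; split; [assumption|]; intros rh ph; unfold polar_direction; simpl.
    rewrite Hc, Hs; destruct e; reflexivity.
Qed.

Section UniformHittingTime.

Variable G : C * C -> Prop.
Variables (x : C) (rho : R).
Hypothesis G_mdet : forall g, G g -> mdet g = 1.
Hypothesis x_in_disk : in_disk x.
Hypothesis every_geodesic_hits :
  forall k, is_geodesic k -> exists t g, G g /\ hdist (k t) (act g x) < rho.

Lemma orbit_in_disk g : G g -> in_disk (act g x).
Proof. intros Gg; apply act_in_disk; [rewrite G_mdet by assumption; lra | assumption]. Qed.

Lemma hitting_time_locally_uniform y : Rabs (fst y) < 1 ->
  exists d t g, 0 < d /\ G g /\ forall y', Rabs (fst y' - fst y) < d ->
    Rabs (fst (snd y') - fst (snd y)) < d -> Rabs (snd (snd y') - snd (snd y)) < d ->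
    pdist (polar_geodesic y' t) (act g x) < tanh_half rho.
Proof.
  intros Hy.
  assert (Hz : in_disk (polar_center y))
    by (unfold in_disk; rewrite Cmod_polar_center; assumption).
  pose proof (Cmod_polar_direction y) as He.
  destruct (every_geodesic_hits _ (std_geodesic_is_geodesic _ _ Hz He)) as [t [g [Gg Ht]]].
  apply hdist_lt_iff in Ht;
    [|apply std_geodesic_in_disk; assumption | apply orbit_in_disk; assumption].
  pose proof (continuous_pdist_polar_geodesic t (act g x) y Hy (orbit_in_disk g Gg)) as Hc.
  apply filterlim_locally with (eps := mkposreal _ (proj2 (Rlt_0_minus _ _) Ht)) in Hc as [d Hd].
  exists d, t, g; split; [apply cond_pos | split; [assumption|]].
  intros [y1 [y2 y3]] H1 H2 H3.
  assert (B : ball y d (y1, (y2, y3))) by (split; [|split]; assumption).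
  apply Hd, Rabs_def2 in B; simpl in B; unfold minus, plus, opp in B; simpl in B.
  unfold polar_geodesic in *; lra.
Qed.

Definition of_Tn3 (y : Compactness.Tn 3 R) : R * (R * R) :=
  (fst y, (fst (snd y), fst (snd (snd y)))).

(* The gauge is also at most [/ (1 + |t|)], so the uniform lower bound on it given by
   compactness bounds the hitting times. *)
Lemma hitting_time_gauge (y : Compactness.Tn 3 R) : exists d : posreal, Rabs (fst y) < 1 ->
  exists t g, G g /\ Rabs t <= / d /\ forall y', close_n 3 d y' y ->
    pdist (polar_geodesic (of_Tn3 y') t) (act g x) < tanh_half rho.
Proof.
  destruct (classic (Rabs (fst y) < 1)) as [Hy|Hy].
  2: { exists (mkposreal 1 Rlt_0_1); intros; contradiction. }
  destruct y as [y1 [y2 [y3 []]]].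
  destruct (hitting_time_locally_uniform (y1, (y2, y3)) Hy) as [d [t [g [Hd [Gg Hnear]]]]].
  assert (Pd : 0 < Rmin d (/ (1 + Rabs t))).
  { apply Rmin_glb_lt; [assumption|]; apply Rinv_0_lt_compat.
    pose proof (Rabs_pos t); lra. }
  exists (mkposreal _ Pd); intros _; exists t, g; split; [assumption|split].
  - simpl; apply Rle_trans with (/ / (1 + Rabs t)).
    + rewrite Rinv_inv; lra.
    + apply Rinv_le_contravar; [assumption | apply Rmin_r].
  - intros [z1 [z2 [z3 []]]] [H1 [H2 [H3 _]]]; simpl in H1, H2, H3.
    apply Hnear; simpl; eapply Rlt_le_trans; eauto; apply Rmin_l.
Qed.

Lemma uniform_hitting_time r : 0 <= r < 1 ->
  exists T, 0 <= T /\ forall k, is_geodesic k -> Cmod (k 0) <= r ->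
    exists t g, Rabs t <= T /\ G g /\ pdist (k t) (act g x) < tanh_half rho.
Proof.
  intros Hr.
  set (a := (0, (0, (0, tt))) : Compactness.Tn 3 R).
  set (b := (r, (2 * PI, (2 * PI, tt))) : Compactness.Tn 3 R).
  destruct (functional_choice _ hitting_time_gauge) as [delta Hdelta].
  destruct (compactness_value 3 a b delta) as [d Hd].
  exists (/ d); split; [left; apply Rinv_0_lt_compat, cond_pos|].
  intros k Hk Hk0.
  destruct (geodesic_eq_std_geodesic k Hk) as [e [He Hke]].
  destruct (polar_center_surj (k 0) r Hk0) as [rh [ph [Brh [Bph Hz]]]].
  destruct (polar_direction_surj e He) as [th [Bth Hee]].
  set (y := (rh, (ph, (th, tt))) : Compactness.Tn 3 R).
  assert (Hb : bounded_n 3 a b y) by (simpl; repeat split; lra).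
  apply NNPP; intros Hno; apply (Hd y Hb); intros [y0 [Hb0 [Hclose Hdy0]]].
  apply Hno; destruct (Hdelta y0) as [t [g [Gg [Ht Hnear]]]].
  { destruct y0 as [y1 [y2 [y3 []]]]; simpl in *; rewrite Rabs_pos_eq; lra. }
  exists t, g; split; [|split; [assumption|]].
  - eapply Rle_trans; [apply Ht|]; apply Rinv_le_contravar; [apply cond_pos | assumption].
  - specialize (Hnear y Hclose); unfold polar_geodesic, of_Tn3 in Hnear; simpl in Hnear.
    rewrite Hz, Hee in Hnear; rewrite Hke; exact Hnear.
Qed.

Variable r : R.
Hypothesis r_lt1 : r < 1.
Hypothesis G_cocompact : forall z, in_disk z -> exists g, G g /\ Cmod (act g z) <= r.
Hypothesis G_gmul : forall g h, G g -> G h -> G (gmul g h).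
Hypothesis G_ginv : forall g, G g -> G (ginv g).

(* Move [l t0] into the disk of radius [r] by some [h] in [G], and pull back the orbit point
   found on the translated geodesic. *)
Lemma orbit_near_geodesic_uniformly : exists T, 0 <= T /\ forall l, is_geodesic l ->
  forall t0, exists t g, Rabs (t - t0) <= T /\ G g /\ pdist (l t) (act g x) < tanh_half rho.
Proof.
  assert (r0 : 0 <= r).
  { destruct (G_cocompact 0) as [g [_ Hg]]; [unfold in_disk; rewrite Cmod_0; lra|].
    pose proof (Cmod_ge_0 (act g 0)); lra. }
  destruct (uniform_hitting_time r (conj r0 r_lt1)) as [T [T0 HT]].
  exists T; split; [assumption|]; intros l Hl t0; pose proof Hl as [Hd _].
  destruct (G_cocompact (l t0) (Hd t0)) as [h [Gh Hh]].
  assert (Mh : 0 < mdet h) by (rewrite G_mdet by assumption; lra).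
  destruct (HT (fun u => act h (l (t0 + u)))) as [t [g [Ht [Gg Hnear]]]].
  - apply geodesic_act, geodesic_shift; assumption.
  - rewrite Rplus_0_r; assumption.
  - exists (t0 + t), (gmul (ginv h) g); split; [|split; [apply G_gmul; auto|]].
    + replace (t0 + t - t0) with t by ring; assumption.
    + assert (Mg : 0 < mdet g) by (rewrite G_mdet by assumption; lra).
      assert (Mh' : 0 < mdet (ginv h)) by (rewrite mdet_ginv; assumption).
      rewrite act_gmul, <- (pdist_act h), act_act_ginv;
        auto using orbit_in_disk, act_in_disk.
Qed.

End UniformHittingTime.

Lemma double_pdist_bounds q : 0 <= q < 1 -> 0 <= 2 * q / (1 + q ^ 2) < 1.
Proof. intros; split; [apply Rdiv_le_0_compat | apply Rlt_div_l]; nra. Qed.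

Lemma foot_exists_near k y t' q : is_geodesic k -> (forall t, ex_derive k t) -> in_disk y ->
  pdist y (k t') <= q -> 0 <= q < 1 ->
  exists s, is_foot k y s /\ pdist y (k s) <= pdist y (k t') /\
    Rabs (s - t') <= two_artanh (2 * q / (1 + q ^ 2)).
Proof.
  intros Hk Hder Hy Hq Bq; pose proof Hk as [Hd _].
  set (M := two_artanh (2 * q / (1 + q ^ 2))).
  pose proof (double_pdist_bounds q Bq).
  assert (M0 : 0 <= M) by (apply two_artanh_ge0; assumption).
  assert (Hwindow : forall u, pdist y (k u) <= pdist y (k t') -> t' - M <= u <= t' + M).
  { intros u Hu.
    assert (P : pdist (k u) (k t') <= 2 * q / (1 + q ^ 2))
      by (apply (pdist_le_of_common_near _ y); auto; lra).
    rewrite geodesic_pdist in P by assumption.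
    apply Rabs_le_between'; rewrite Rabs_minus_sym.
    unfold M; rewrite <- (two_artanh_tanh_half (Rabs (t' - u))).
    apply two_artanh_le; [apply tanh_half_bounds | assumption | lra]. }
  set (F := fun u => pdist (k u) y).
  destruct (continuous_ab_min_consistent F (t' - M) (t' + M)) as [s [Hs Bs]]; [lra| |].
  { intros; apply continuous_pdist; auto using ccontinuous_of_ex_derive. }
  assert (Hmin : forall u, pdist y (k s) <= pdist y (k u)).
  { intros u; unfold F in Hs; rewrite !(pdist_sym y).
    destruct (Rle_or_lt (pdist (k u) y) (pdist (k t') y)) as [Hu|Hu].
    - apply Hs, Hwindow; rewrite !(pdist_sym y); assumption.
    - pose proof (Hs t' ltac:(lra)); lra. }
  exists s; split; [|split; [apply Hmin | apply Rabs_le_between'; lra]].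
  intros u; apply hdist_le_iff; auto.
Qed.

Lemma polygon_interior_in_disk vs tau x : hyp_polygon vs tau -> interior_C tau x -> in_disk x.
Proof.
  intros [_ [Hvs [Htau _]]] [e [He Hball]].
  assert (Hx : tau x).
  { apply Hball; replace (x - x)%C with (RtoC 0) by ring; rewrite Cmod_0; assumption. }
  apply Htau in Hx; apply Hx; [intros y z _ _ w [Hw _]; exact Hw | exact Hvs].
Qed.

Theorem lemma3p3 (G : C * C -> Prop) (vs : list C) (tau : C -> Prop)
  (l : R -> C) (x : C) (rho : R) :
  fuchsian G -> cocompact G ->
  hyp_polygon vs tau -> fundamental_domain G tau ->
  (forall i, (i < length vs)%nat -> exists g, side_pairing G vs tau i g) ->
  (forall i g, (i < length vs)%nat -> side_pairing G vs tau i g ->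
      ~ is_id_psu (gmul g g)) ->
  is_geodesic l -> (forall t, ex_derive l t) -> dense_in_ST G l ->
  interior_C tau x -> 0 < rho ->
  (forall k, is_geodesic k ->
     exists t g, G g /\ hdist (k t) (act g x) < rho) ->
  exists eps, 0 < eps /\ rel_dense eps (S_plus G l rho x).
Proof.
  intros [HSU [_ [Hmul [Hinv _]]]] [r [Hr Hcc]] Hpoly _ _ _ Hl Hder _ Hint Hrho Hhit.
  pose proof (polygon_interior_in_disk vs tau x Hpoly Hint) as Hx.
  destruct (orbit_near_geodesic_uniformly G x rho HSU Hx Hhit r Hr Hcc Hmul Hinv)
    as [T [T0 HT]].
  pose proof (tanh_half_bounds rho); pose proof (tanh_half_ge0 rho ltac:(lra)).
  set (c := tanh_half rho) in *.
  assert (Hc : 0 <= c < 1) by lra.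
  set (M := two_artanh (2 * c / (1 + c ^ 2))).
  assert (M0 : 0 <= M) by (apply two_artanh_ge0, double_pdist_bounds, Hc).
  exists (T + M + 1); split; [lra|]; intros t0.
  destruct (HT l Hl t0) as [t [g [Ht [Gg Hnear]]]].
  pose proof (orbit_in_disk G x HSU Hx g Gg) as Hgx.
  rewrite pdist_sym in Hnear.
  destruct (foot_exists_near l (act g x) t c Hl Hder Hgx ltac:(lra) Hc)
    as [s [Hfoot [Hcloser Hs]]].
  exists s; split.
  - exists g; split; [assumption | split; [|assumption]].
    exists s; split; [assumption|]; left.
    apply hdist_lt_iff; [assumption | apply Hl | fold c; lra].
  - replace (t0 - s) with (- (t - t0) - (s - t)) by ring.
    eapply Rle_trans; [apply Rabs_triang|]; rewrite !Rabs_Ropp; fold M in Hs; lra.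
Qed.
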